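(* Let $\widehat G\in\mathbb{C}^{2\times 2}$ and $\widehat J=\mathrm{diag}(j_{11},j_{22})$ with $j_{11},j_{22}\in\{1,-1\}$. Then there exist a unitary $\check U\in\mathbb{C}^{2\times2}$ and a matrix $\check V\in\mathbb{C}^{2\times 2}$ that is both unitary and $\widehat J$-unitary ($\check V^\ast\widehat J\check V=\widehat J$) such that $\widehat T=\check U^\ast\widehat G\check V$ is real with non-negative entries and: (i) if $\widehat J=\pm I_2$, or if $\widehat J$ is indefinite and the first column of $\widehat G$ has Frobenius norm at least that of the second column, then $\widehat T$ is upper triangular with $\hat t_{11}^2\ge\hat t_{12}^2+\hat t_{22}^2$; (ii) if $\widehat J$ is indefinite and the first column of $\widehat G$ has strictly smaller Frobenius norm than the second, then $\widehat T$ is lower triangular with $\hat t_{22}^2\ge\hat t_{21}^2+\hat t_{11}^2$.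
   Context: This is the $2\times 2$ $\widehat J$-UTV factorization. A matrix $V$ is $\widehat J$-unitary if $V^\ast\widehat J V=\widehat J$. *)

(* Complex numbers are modelled by an arbitrary
   numClosedFieldType C. *)
From HB Require Import structures.
From mathcomp Require Import all_boot all_order all_algebra.
Set Implicit Arguments. Unset Strict Implicit. Unset Printing Implicit Defensive.
Import Order.TTheory GRing.Theory Num.Theory.
Local Open Scope ring_scope.

Definition ctrmx (C : numClosedFieldType) (m n : nat) (A : 'M[C]_(m, n)) : 'M[C]_(n, m) :=
  (map_mx Num.conj A)^T.

Definition unitary_mx (C : numClosedFieldType) (n : nat) (U : 'M[C]_n) : Prop :=
  ctrmx U *m U = 1%:M.

Definition J_unitary_mx (C : numClosedFieldType) (n : nat) (J V : 'M[C]_n) : Prop :=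
  ctrmx V *m J *m V = J.

Definition Jhat (C : numClosedFieldType) (j11 j22 : C) : 'M[C]_2 :=
  \matrix_(i < 2, j < 2) (if i == j then (if i == 0 then j11 else j22) else 0).

Definition col_norm2 (C : numClosedFieldType) (G : 'M[C]_2) (k : 'I_2) : C :=
  \sum_(i < 2) `|G i k| ^+ 2.

(* A Givens rotation U0 maps the first column of G to a nonnegative multiple of e1.
   Unimodular diagonal factors on both sides then make the two entries of the second
   column nonnegative; a unimodular diagonal V commutes with the diagonal J, hence is
   J-unitary. Unitary U and unimodular diagonal V preserve column norms, so
   t11^2 = |g1|^2 >= |g2|^2 = t12^2 + t22^2 when the first column is the longer one.
   Otherwise the columns are swapped first: for J = +-I the swap itself is J-unitary,
   while for indefinite J one conjugates the whole factorization by the swap, keeping V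
   diagonal and turning the upper form into a lower one. Only whether j11 = j22 matters. *)

From mathcomp Require Import all_boot all_order all_algebra.
From mathcomp Require Import perm ring.
Set Implicit Arguments.
Unset Strict Implicit.
Unset Printing Implicit Defensive.

Import Order.TTheory GRing.Theory Num.Theory.
Local Open Scope ring_scope.

Section ConjugateTranspose.
Variable C : numClosedFieldType.

Lemma ctrmxK m n (A : 'M[C]_(m, n)) : ctrmx (ctrmx A) = A.
Proof. by apply/matrixP=> i j; rewrite !mxE conjCK. Qed.

Lemma ctrmx_mul m n p (A : 'M[C]_(m, n)) (B : 'M[C]_(n, p)) :
  ctrmx (A *m B) = ctrmx B *m ctrmx A.
Proof. by rewrite /ctrmx map_mxM trmx_mul. Qed.

Lemma ctrmx_diag n (d : 'rV[C]_n) : ctrmx (diag_mx d) = diag_mx (map_mx Num.conj d).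
Proof. by rewrite /ctrmx map_diag_mx tr_diag_mx. Qed.

Lemma ctrmx_tperm n (i1 i2 : 'I_n) : ctrmx (tperm_mx i1 i2) = tperm_mx i1 i2 :> 'M[C]_n.
Proof. by rewrite /ctrmx map_tperm_mx tr_tperm_mx. Qed.

End ConjugateTranspose.

Section JUnitary.
Variables (C : numClosedFieldType) (n : nat).
Implicit Types (J U V : 'M[C]_n) (d : 'rV[C]_n).

Definition unimodular d : Prop := forall j, (d 0 j)^* * d 0 j = 1.

Lemma unitary_J_unitary U : unitary_mx U <-> J_unitary_mx 1%:M U.
Proof. by rewrite /unitary_mx /J_unitary_mx mulmx1. Qed.

Lemma J_unitary_mul J U V :
  J_unitary_mx J U -> J_unitary_mx J V -> J_unitary_mx J (U *m V).
Proof.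
rewrite /J_unitary_mx ctrmx_mul => hU hV.
by rewrite -!mulmxA (mulmxA J) (mulmxA (ctrmx U)) (mulmxA (ctrmx U)) hU mulmxA.
Qed.

Lemma unitary_mul U V : unitary_mx U -> unitary_mx V -> unitary_mx (U *m V).
Proof. by rewrite !unitary_J_unitary; apply: J_unitary_mul. Qed.

Lemma J_unitary_scalar (a : C) U : unitary_mx U -> J_unitary_mx a%:M U.
Proof. by move=> hU; rewrite /J_unitary_mx -mulmxA -scalar_mxC mulmxA hU mul1mx. Qed.

Lemma unitary_tperm (i1 i2 : 'I_n) : unitary_mx (tperm_mx i1 i2 : 'M[C]_n).
Proof. by rewrite /unitary_mx ctrmx_tperm -perm_mxM tperm2 perm_mx1. Qed.

Lemma J_unitary_diag (j d : 'rV[C]_n) : unimodular d -> J_unitary_mx (diag_mx j) (diag_mx d).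
Proof.
move=> hd; rewrite /J_unitary_mx ctrmx_diag !mulmx_diag; congr diag_mx.
by apply/matrixP=> i k; rewrite !mxE mulrAC hd mul1r [i]ord1.
Qed.

Lemma unitary_diag d : unimodular d -> unitary_mx (diag_mx d).
Proof. by move=> hd; rewrite unitary_J_unitary -diag_const_mx; apply: J_unitary_diag. Qed.

Lemma unimodular_xcol (i1 i2 : 'I_n) d : unimodular d -> unimodular (xcol i1 i2 d).
Proof. by move=> hd j; rewrite mxE. Qed.

Lemma tperm_diag_mx (i1 i2 : 'I_n) d :
  tperm_mx i1 i2 *m diag_mx d *m tperm_mx i1 i2 = diag_mx (xcol i1 i2 d).
Proof.
rewrite -xrowE -xcolE; apply/matrixP=> i j; rewrite !mxE.
by rewrite (inj_eq perm_inj).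
Qed.

End JUnitary.

Section TwoByTwo.
Variable C : numClosedFieldType.
Implicit Types (G T U : 'M[C]_2).

Lemma ord2_cases (i : 'I_2) : i = 0 \/ i = 1.
Proof. by case: i => [[|[|m]] hi]; [left | right | ]; try apply/val_inj. Qed.

Lemma matrix2P (A B : 'M[C]_2) :
  A 0 0 = B 0 0 -> A 0 1 = B 0 1 -> A 1 0 = B 1 0 -> A 1 1 = B 1 1 -> A = B.
Proof.
move=> h00 h01 h10 h11; apply/matrixP=> i j.
by case: (ord2_cases i) => ->; case: (ord2_cases j) => ->.
Qed.

Lemma sum_ord2 (F : 'I_2 -> C) : \sum_(i < 2) F i = F 0 + F 1.
Proof. by rewrite !big_ord_recl big_ord0 addr0; congr (F _ + F _); apply/val_inj. Qed.

Lemma mulmx2E (A B : 'M[C]_2) i j : (A *m B) i j = A i 0 * B 0 j + A i 1 * B 1 j.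
Proof. by rewrite mxE sum_ord2. Qed.

Definition mx2 (a b c d : C) : 'M[C]_2 :=
  \matrix_(i, j) if i == 0 then (if j == 0 then a else b) else (if j == 0 then c else d).

Lemma ctrmx_mx2 a b c d : ctrmx (mx2 a b c d) = mx2 a^* c^* b^* d^*.
Proof. by apply: matrix2P; rewrite !mxE. Qed.

Definition row2 (x y : C) : 'rV[C]_2 := \row_j (if j == 0 then x else y).

Lemma unimodular_row2 x y : x^* * x = 1 -> y^* * y = 1 -> unimodular (row2 x y).
Proof. by move=> hx hy j; rewrite mxE; case: ifP. Qed.

Lemma Jhat_diag (j11 j22 : C) : Jhat j11 j22 = diag_mx (row2 j11 j22).
Proof. by apply: matrix2P; rewrite !mxE. Qed.

Lemma Jhat_scalar (j : C) : Jhat j j = j%:M.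
Proof. by apply: matrix2P; rewrite !mxE. Qed.

Lemma col_norm2E G k : col_norm2 G k = `|G 0 k| ^+ 2 + `|G 1 k| ^+ 2.
Proof. exact: sum_ord2. Qed.

Lemma col_norm2_gram G k : col_norm2 G k = (ctrmx G *m G) k k.
Proof. by rewrite mxE; apply: eq_bigr => i _; rewrite !mxE normCKC. Qed.

Lemma col_norm2_unitaryl U G k :
  unitary_mx U -> col_norm2 (ctrmx U *m G) k = col_norm2 G k.
Proof.
move=> hU; rewrite !col_norm2_gram ctrmx_mul ctrmxK.
by rewrite -!mulmxA (mulmxA U) (mulmx1C hU) mul1mx.
Qed.

Lemma col_norm2_diagr G (d : 'rV[C]_2) k :
  unimodular d -> col_norm2 (G *m diag_mx d) k = col_norm2 G k.
Proof.
move=> hd; apply: eq_bigr => i _.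
by rewrite mul_mx_diag mxE normrM exprMn (normCKC (d 0 k)) hd mulr1.
Qed.

Lemma col_norm2_xcol G k : col_norm2 (xcol 0 1 G) k = col_norm2 G (tperm 0 1 k).
Proof. by apply: eq_bigr => i _; rewrite mxE. Qed.

Lemma col_norm2_ge0 G k : 0 <= col_norm2 G k.
Proof. by rewrite col_norm2E addr_ge0 ?exprn_ge0. Qed.

Lemma ger0_col_norm2 T k :
  (forall i, 0 <= T i k) -> col_norm2 T k = T 0 k ^+ 2 + T 1 k ^+ 2.
Proof. by move=> hT; rewrite col_norm2E !ger0_norm. Qed.

End TwoByTwo.

Section Factorization.
Variable C : numClosedFieldType.
Implicit Types (G T U : 'M[C]_2) (z : C).

Definition phase z : C := if z == 0 then 1 else z / `|z|.

Lemma phase_unimodular z : (phase z)^* * phase z = 1.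
Proof.
rewrite /phase; case: eqP => [_ | /eqP z0]; first by rewrite conjC1 mulr1.
have nz0 : `|z| != 0 by rewrite normr_eq0.
by rewrite rmorphM fmorphV /= conj_normC mulrACA -normCKC -invfM divff // mulf_neq0.
Qed.

Lemma conj_phaseM z : (phase z)^* * z = `|z|.
Proof.
rewrite /phase; case: eqP => [-> | /eqP z0]; first by rewrite normr0 mulr0.
have nz0 : `|z| != 0 by rewrite normr_eq0.
by rewrite rmorphM fmorphV /= conj_normC mulrAC -normCKC expr2 -mulrA divff ?mulr1.
Qed.

Lemma givens_col0 G :
  exists U, [/\ unitary_mx U, 0 <= (ctrmx U *m G) 0 0 & (ctrmx U *m G) 1 0 = 0].
Proof.
have [G0|G0] := eqVneq (col_norm2 G 0) 0.
  have /andP[] : (`|G 0 0| ^+ 2 == 0) && (`|G 1 0| ^+ 2 == 0).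
    by rewrite -paddr_eq0 ?exprn_ge0 // -col_norm2E G0.
  rewrite !expf_eq0 /= !normr_eq0 => /eqP g00 /eqP g10.
  exists 1%:M; rewrite /unitary_mx /ctrmx map_scalar_mx /= conjC1 trmx1 !mul1mx.
  by rewrite g00 g10.
set a1 := G 0 0; set a2 := G 1 0; set r := sqrtC (col_norm2 G 0).
have r_gt0 : 0 < r by rewrite sqrtC_gt0 lt_def G0 col_norm2E addr_ge0 ?exprn_ge0.
have r0 : r != 0 by rewrite gt_eqF.
have r_conj : r^* = r by rewrite conj_Creal // ger0_real ?ltW.
have r2 : r ^+ 2 = a1^* * a1 + a2^* * a2 by rewrite sqrtCK col_norm2E !normCKC.
exists (mx2 (a1 / r) (- a2^* / r) (a2 / r) (a1^* / r)).
have norm_over_r2 : (a1^* * a1 + a2^* * a2) / r ^+ 2 = 1 by rewrite -r2 divff // expf_neq0.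
rewrite /unitary_mx ctrmx_mx2 !(rmorphM, rmorphN, fmorphV) /= r_conj !conjCK.
split.
- apply: matrix2P; rewrite mulmx2E !mxE /= -/a1 -/a2;
    by [rewrite -norm_over_r2; field | field].
- rewrite mulmx2E !mxE /= -/a1 -/a2.
  have -> : a1^* / r * a1 + a2^* / r * a2 = r.
    by rewrite -[RHS]mul1r -norm_over_r2; field.
  exact: ltW.
- by rewrite mulmx2E !mxE /= -/a1 -/a2; field.
Qed.

Lemma nonneg_upper_UTV G :
  exists U d, [/\ unitary_mx U, unimodular d &
    let T := ctrmx U *m G *m diag_mx d in (forall i j, 0 <= T i j) /\ T 1 0 = 0].
Proof.
have [U0 [hU0 c00 c10]] := givens_col0 G.
set c := ctrmx U0 *m G in c00 c10.
set d := (phase (c 0 1))^*; set e := phase (c 1 1 * d).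
have hd : d^* * d = 1 by rewrite conjCK mulrC phase_unimodular.
have h1 : 1^* * 1 = 1 :> C by rewrite conjC1 mulr1.
have hU : unitary_mx (U0 *m diag_mx (row2 1 e)).
  by apply: unitary_mul hU0 (unitary_diag _); apply: unimodular_row2 (phase_unimodular _).
exists (U0 *m diag_mx (row2 1 e)), (row2 1 d); split=> //; first exact: unimodular_row2.
have T_entry i j : (ctrmx (U0 *m diag_mx (row2 1 e)) *m G *m diag_mx (row2 1 d)) i j
    = (row2 1 e 0 i)^* * c i j * row2 1 d 0 j.
  by rewrite ctrmx_mul ctrmx_diag -(mulmxA _ (ctrmx U0)) -/c mul_mx_diag mul_diag_mx !mxE.
clearbody c; split=> [i j|]; last by rewrite T_entry c10 !mxE mulr0 mul0r.
rewrite T_entry !mxE.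
case: (ord2_cases i) => -> /=; case: (ord2_cases j) => -> /=.
- by rewrite conjC1 mul1r mulr1.
- by rewrite conjC1 mul1r mulrC conj_phaseM.
- by rewrite c10 mulr0 mul0r.
- by rewrite -mulrA conj_phaseM.
Qed.

Lemma col_norm2_UTV G U d k : unitary_mx U -> unimodular d ->
  col_norm2 (ctrmx U *m G *m diag_mx d) k = col_norm2 G k.
Proof. by move=> hU hd; rewrite -mulmxA col_norm2_unitaryl // col_norm2_diagr. Qed.

Lemma nonneg_upper_UTV_col_norm2 G :
  exists U d, [/\ unitary_mx U, unimodular d &
    let T := ctrmx U *m G *m diag_mx d in
    [/\ forall i j, 0 <= T i j, T 1 0 = 0, T 0 0 ^+ 2 = col_norm2 G 0
      & T 0 1 ^+ 2 + T 1 1 ^+ 2 = col_norm2 G 1]].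
Proof.
have [U [d [hU hd]]] := nonneg_upper_UTV G; set T := ctrmx U *m G *m diag_mx d.
move=> [T_ge0 T10]; exists U, d; split=> //; split=> //.
- by rewrite -(col_norm2_UTV G 0 hU hd) ger0_col_norm2 // T10 expr0n addr0.
- by rewrite -(col_norm2_UTV G 1 hU hd) ger0_col_norm2.
Qed.

Lemma J_UTV_upper G j11 j22 : col_norm2 G 1 <= col_norm2 G 0 ->
  exists U V, [/\ unitary_mx U, unitary_mx V, J_unitary_mx (Jhat j11 j22) V &
    let T := ctrmx U *m G *m V in
    [/\ forall i j, 0 <= T i j, T 1 0 = 0 & T 1 1 ^+ 2 + T 0 1 ^+ 2 <= T 0 0 ^+ 2]].
Proof.
move=> le10; have [U [d [hU hd [T_ge0 T10 n0 n1]]]] := nonneg_upper_UTV_col_norm2 G.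
exists U, (diag_mx d); split=> //; first exact: unitary_diag.
  by rewrite Jhat_diag; apply: J_unitary_diag.
by split=> //; rewrite addrC n0 n1.
Qed.

Lemma J_UTV_upper_swap G (a : C) : col_norm2 G 0 <= col_norm2 G 1 ->
  exists U V, [/\ unitary_mx U, unitary_mx V, J_unitary_mx (Jhat a a) V &
    let T := ctrmx U *m G *m V in
    [/\ forall i j, 0 <= T i j, T 1 0 = 0 & T 1 1 ^+ 2 + T 0 1 ^+ 2 <= T 0 0 ^+ 2]].
Proof.
move=> le01; have [U [d [hU hd]]] := nonneg_upper_UTV_col_norm2 (xcol 0 1 G).
rewrite !col_norm2_xcol tpermL tpermR xcolE mulmxA => -[T_ge0 T10 n0 n1].
have hV : unitary_mx (tperm_mx 0 1 *m diag_mx d).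
  by apply: unitary_mul (unitary_diag hd); apply: unitary_tperm.
exists U, (tperm_mx 0 1 *m diag_mx d); split=> //.
  by rewrite Jhat_scalar; apply: J_unitary_scalar.
by rewrite !mulmxA; split=> //; rewrite addrC n0 n1.
Qed.

Lemma J_UTV_lower G j11 j22 : col_norm2 G 0 <= col_norm2 G 1 ->
  exists U V, [/\ unitary_mx U, unitary_mx V, J_unitary_mx (Jhat j11 j22) V &
    let T := ctrmx U *m G *m V in
    [/\ forall i j, 0 <= T i j, T 0 1 = 0 & T 1 0 ^+ 2 + T 0 0 ^+ 2 <= T 1 1 ^+ 2]].
Proof.
move=> le01; have [U [d [hU hd]]] := nonneg_upper_UTV_col_norm2 (xcol 0 1 G).
rewrite !col_norm2_xcol tpermL tpermR.
set T' := ctrmx U *m xcol 0 1 G *m diag_mx d => -[T_ge0 T10 n0 n1].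
exists (U *m tperm_mx 0 1), (diag_mx (xcol 0 1 d)); split.
- by apply: unitary_mul hU _; apply: unitary_tperm.
- exact/unitary_diag/unimodular_xcol.
- by rewrite Jhat_diag; apply/J_unitary_diag/unimodular_xcol.
have -> : ctrmx (U *m tperm_mx 0 1) *m G *m diag_mx (xcol 0 1 d) = xrow 0 1 (xcol 0 1 T').
  by rewrite /T' ctrmx_mul ctrmx_tperm -tperm_diag_mx xrowE !xcolE !mulmxA.
clearbody T'; split=> [i j||]; rewrite !mxE ?tpermL ?tpermR //.
by move: le01; rewrite -n0 -n1.
Qed.

End Factorization.

Theorem mainTheorem7 (C : numClosedFieldType) (G : 'M[C]_2) (j11 j22 : C)
  (hj11 : j11 = 1 \/ j11 = -1) (hj22 : j22 = 1 \/ j22 = -1) :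
  exists (U V : 'M[C]_2),
    unitary_mx U /\ unitary_mx V /\ J_unitary_mx (Jhat j11 j22) V /\
    let T := ctrmx U *m G *m V in
    (forall i j, 0 <= T i j) /\
    ((j11 = j22 \/ (j11 <> j22 /\ col_norm2 G 1 <= col_norm2 G 0)) ->
       T 1 0 = 0 /\ T 1 1 ^+ 2 + T 0 1 ^+ 2 <= T 0 0 ^+ 2) /\
    ((j11 <> j22 /\ col_norm2 G 0 < col_norm2 G 1) ->
       T 0 1 = 0 /\ T 1 0 ^+ 2 + T 0 0 ^+ 2 <= T 1 1 ^+ 2).
Proof.
have real_norm k : col_norm2 G k \is Num.real by apply/ger0_real/col_norm2_ge0.
have [le10 | lt01] := real_leP (real_norm 1) (real_norm 0).
  have [U [V [hU hV hJ [T_ge0 T10 dom]]]] := J_UTV_upper j11 j22 le10.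
  by exists U, V; do 5!split=> //; case.
have [<- | j_neq] := eqVneq j11 j22.
  have [U [V [hU hV hJ [T_ge0 T10 dom]]]] := J_UTV_upper_swap j11 (ltW lt01).
  by exists U, V; do 5!split=> //; case.
have [U [V [hU hV hJ [T_ge0 T01 dom]]]] := J_UTV_lower j11 j22 (ltW lt01).
exists U, V; do 5!split=> //.
by case=> [/eqP | []]; rewrite ?(negbTE j_neq).
Qed.
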